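(* Let $((A_i,B_i))_{i\in\mathbb N}$ be a strictly increasing sequence of tight separations of a connected locally finite graph $G$, with limit $(A,B)=(\bigcup_iA_i,\bigcap_iB_i)$. If the sequence is non-exhaustive (i.e. $B\neq\emptyset$), then $A\cap B$ is infinite.
   Context: A separation of $G$ is an unordered pair $\{A,B\}$ of subsets of $V(G)$ with $A\cup B=V(G)$ and no edge between $A\setminus B$ and $B\setminus A$; oriented separations $(A,B)$ are ordered by $(A,B)\le(C,D)$ iff $A\subseteq C$ and $B\supseteq D$. For $X\subseteq V(G)$, a component $K$ of $G-X$ is tight if $N_G(K)=X$. A separation $\{A,B\}$ is tight if both $A\setminus B$ and $B\setminus A$ contain the vertex set of a tight component of $G-(A\cap B)$. A strictly increasing sequence is exhaustive if its limit $(A,B)$ has $B=\emptyset$. *)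

From Stdlib Require Import List.

Section Graphs.
Variable V : Type.
Variable adj : V -> V -> Prop.

Definition simple_graph : Prop :=
  (forall u v, adj u v -> adj v u) /\ (forall v, ~ adj v v).

Definition finite_set (S : V -> Prop) : Prop :=
  exists l : list V, forall x, S x -> In x l.

Definition locally_finite : Prop := forall v, finite_set (adj v).

Inductive reach (S : V -> Prop) : V -> V -> Prop :=
| reach_refl x : S x -> reach S x x
| reach_step x y z : reach S x y -> adj y z -> S z -> reach S x z.

Definition connected_graph : Prop := forall x y, reach (fun _ => True) x y.

(* K is (the vertex set of) a component of G - X *)
Definition component (X K : V -> Prop) : Prop :=
  exists x, ~ X x /\ forall y, K y <-> reach (fun v => ~ X v) x y.

Definition nbhd (K : V -> Prop) (v : V) : Prop :=
  ~ K v /\ exists u, K u /\ adj u v.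

Definition tight_component (X K : V -> Prop) : Prop :=
  component X K /\ forall v, nbhd K v <-> X v.

Definition separation (A B : V -> Prop) : Prop :=
  (forall v, A v \/ B v) /\
  (forall u v, A u -> ~ B u -> B v -> ~ A v -> ~ adj u v).

Definition tight_separation (A B : V -> Prop) : Prop :=
  separation A B /\
  (let X := fun v => A v /\ B v in
   (exists K, tight_component X K /\ forall v, K v -> A v /\ ~ B v) /\
   (exists K, tight_component X K /\ forall v, K v -> B v /\ ~ A v)).

Definition sep_le (A B C D : V -> Prop) : Prop :=
  (forall v, A v -> C v) /\ (forall v, D v -> B v).

Definition set_eq (S T : V -> Prop) : Prop := forall v, S v <-> T v.

Definition sep_lt (A B C D : V -> Prop) : Prop :=
  sep_le A B C D /\ ~ (set_eq A C /\ set_eq B D).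

End Graphs.
Arguments simple_graph {V}.
Arguments connected_graph {V}.
Arguments locally_finite {V}.
Arguments tight_separation {V}.
Arguments sep_lt {V}.
Arguments finite_set {V}.

(** If the separator [X] of the limit were finite, then from some index [N] on
    every [A_i] would contain all vertices of [A] in [X] and in its (finite)
    neighbourhood.  A tight component on the [B_i]-side then forces
    [A_i ∩ B_i = X] for all [i >= N].  The set [A_(N+1) \ A_N] is then closed
    under adjacency (it cannot touch [X], whose [A]-neighbours all lie in
    [A_N]), so by connectedness it is empty; hence [(A_N, B_N) = (A_(N+1), B_(N+1))],
    contradicting strictness.  [X] is nonempty because [G] is connected and
    both [A \ B] and [B] are nonempty. *)
From Stdlib Require Import List Classical Lia.

Section Graph.
Variable V : Type.
Variable adj : V -> V -> Prop.
Hypothesis adj_sym : forall u v, adj u v -> adj v u.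

Lemma reach_endpoint (S : V -> Prop) x y : reach V adj S x y -> S y.
Proof. now destruct 1. Qed.

Lemma reach_closed (S P : V -> Prop) x y :
  reach V adj S x y -> P x ->
  (forall a b, S a -> S b -> adj a b -> P a -> P b) -> P y.
Proof.
  intros Hxy Px Hstep.
  induction Hxy as [x _ | x y z Hxy IH Hyz Sz]; auto.
  apply (Hstep y z); auto. exact (reach_endpoint _ _ _ Hxy).
Qed.

Lemma connected_closed (P : V -> Prop) x y :
  connected_graph adj -> P x -> (forall a b, adj a b -> P a -> P b) -> P y.
Proof.
  intros Hconn Px Hstep.
  apply (reach_closed _ P x y (Hconn x y) Px). intros a b _ _. apply Hstep.
Qed.

Lemma component_closed (X K P : V -> Prop) y u :
  component V adj X K ->
  (forall a b, ~ X a -> ~ X b -> adj a b -> P a -> P b) ->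
  K y -> K u -> P y -> P u.
Proof.
  intros [r [_ HK]] Hstep Ky Ku Py.
  assert (Pr : P r).
  { apply NNPP; intro nPr.
    (* by symmetry of [adj], failure of [P] also propagates *)
    apply (reach_closed _ (fun v => ~ P v) r y (proj1 (HK y) Ky)); auto.
    intros a b Xa Xb Hab nPa Pb. apply nPa, (Hstep b a); auto. }
  exact (reach_closed _ P r u (proj1 (HK u) Ku) Pr Hstep).
Qed.

Lemma separation_sym_no_edge (A B : V -> Prop) u v :
  separation V adj A B -> A u -> ~ B u -> B v -> ~ A v -> adj v u -> False.
Proof. intros [_ Hsep] Au Bu Bv Av Hvu. exact (Hsep u v Au Bu Bv Av (adj_sym _ _ Hvu)). Qed.

Lemma tight_separation_left (A B : V -> Prop) :
  tight_separation adj A B -> exists a, A a /\ ~ B a.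
Proof.
  intros [_ [[K [[[r [Xr HK]] _] HKA]] _]].
  exists r. apply HKA, HK. now constructor.
Qed.

Lemma separator_nonempty (A B : V -> Prop) a b :
  connected_graph adj -> separation V adj A B ->
  A a -> ~ B a -> B b -> exists x, A x /\ B x.
Proof.
  intros Hconn Hsepn Aa Ba Bb.
  apply NNPP; intro Hempty.
  assert (Hb : A b /\ ~ B b).
  { apply (connected_closed (fun v => A v /\ ~ B v) a b Hconn); [now split|].
    intros u w Huw [Au Bu].
    destruct (proj1 Hsepn w) as [Aw|Bw].
    - split; auto. intro Bw. apply Hempty. now exists w.
    - exfalso. apply (proj2 Hsepn u w Au Bu Bw); auto.
      intro Aw. apply Hempty. now exists w. }
  now destruct Hb.
Qed.

Lemma finite_union (S T : V -> Prop) :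
  finite_set S -> finite_set T -> finite_set (fun v => S v \/ T v).
Proof.
  intros [l Hl] [l' Hl']. exists (l ++ l').
  intros v [Sv|Tv]; apply in_or_app; auto.
Qed.

Lemma finite_neighbourhood (S : V -> Prop) :
  locally_finite adj -> finite_set S ->
  finite_set (fun n => exists x, S x /\ adj x n).
Proof.
  intros Hlf [l Hl].
  assert (Hlist : exists l', forall n, (exists x, In x l /\ adj x n) -> In n l').
  { clear Hl. induction l as [|a l [l' Hl']].
    - exists nil. intros n [x [[] _]].
    - destruct (Hlf a) as [la Hla]. exists (la ++ l').
      intros n [x [[<-|Hx] Hxn]]; apply in_or_app; eauto. }
  destruct Hlist as [l' Hl']. exists l'.
  intros n [x [Sx Hxn]]. apply Hl'. eauto.
Qed.

Section Limit.
Variables As Bs : nat -> V -> Prop.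
Hypothesis tight : forall i, tight_separation adj (As i) (Bs i).
Hypothesis chain : forall i, sep_le V (As i) (Bs i) (As (S i)) (Bs (S i)).

Definition limA v := exists i, As i v.
Definition limB v := forall i, Bs i v.

Let sep i : separation V adj (As i) (Bs i) := proj1 (tight i).

Lemma As_mono i j v : i <= j -> As i v -> As j v.
Proof. induction 1; auto. intro. apply (proj1 (chain m)); auto. Qed.

Lemma Bs_anti i j v : i <= j -> Bs j v -> Bs i v.
Proof. induction 1; auto. intro. apply IHle, (proj2 (chain m)); auto. Qed.

Lemma limit_separation : separation V adj limA limB.
Proof.
  split.
  - intro v. destruct (classic (limB v)) as [Bv|Bv]; [now right|left].
    destruct (not_all_ex_not _ _ Bv) as [i Bi].
    exists i. destruct (proj1 (sep i) v); tauto.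
  - intros u v [i Au] Bu Bv Av.
    destruct (not_all_ex_not _ _ Bu) as [j Bj].
    apply (proj2 (sep (max i j)) u v).
    + apply (As_mono i); auto; lia.
    + intro B'. apply Bj, (Bs_anti j (max i j)); auto; lia.
    + apply Bv.
    + intro A'. apply Av. now exists (max i j).
Qed.

Lemma finite_eventually_in_As (T : V -> Prop) :
  finite_set T -> exists N, forall v, T v -> limA v -> As N v.
Proof.
  intros [l Hl].
  assert (Hlist : exists N, forall v, In v l -> limA v -> As N v).
  { clear Hl. induction l as [|a l [N HN]].
    - exists 0. intros v [].
    - destruct (classic (limA a)) as [[j Aj]|Na].
      + exists (max N j). intros v [<-|Hv] Av.
        * apply (As_mono j); auto; lia.
        * apply (As_mono N); auto; lia.
      + exists N. intros v [<-|Hv] Av; [contradiction|auto]. }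
  destruct Hlist as [N HN]. exists N. auto.
Qed.

Let X v := limA v /\ limB v.

Section FiniteSeparator.
Hypothesis connected : connected_graph adj.
Variable x0 : V.
Hypothesis X_x0 : X x0.
Variable N : nat.
Hypothesis absorbs : forall v, (X v \/ exists x, X x /\ adj x v) -> limA v -> As N v.

Lemma neighbour_of_separator_in_As v x i :
  N <= i -> X x -> adj x v -> limA v -> As i v.
Proof. intros Hi Xx Hxv Av. apply (As_mono N); auto. apply absorbs; auto. right. now exists x. Qed.

Lemma limit_separator_sub_sep i v : N <= i -> X v -> As i v /\ Bs i v.
Proof.
  intros Hi [Av Bv]. split; auto.
  apply (As_mono N); auto. apply absorbs; [left; now split | exact Av].
Qed.

Lemma sep_separator_sub_limit i v : N <= i -> As i v -> Bs i v -> X v.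
Proof.
  intros Hi Av Bv.
  destruct (tight i) as [_ [_ [D [[HD HnD] HDB]]]].
  destruct (proj2 (HnD v) (conj Av Bv)) as [_ [u [Du Huv]]].
  destruct (proj2 (HnD x0) (limit_separator_sub_sep i x0 Hi X_x0)) as [_ [y [Dy Hyx]]].
  assert (Ay : ~ limA y).
  { intro Ay. apply (proj2 (HDB y Dy)).
    exact (neighbour_of_separator_in_As y x0 i Hi X_x0 (adj_sym _ _ Hyx) Ay). }
  assert (Pu : limB u /\ ~ limA u).
  { apply (component_closed _ D (fun w => limB w /\ ~ limA w) y u HD); auto.
    - intros a c Xa Xc Hac [Ba Aa].
      assert (Ac : ~ limA c).
      { intro Ac. destruct (classic (limB c)) as [Bc|Bc].
        - apply Xc, limit_separator_sub_sep; auto. now split.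
        - exact (separation_sym_no_edge _ _ c a limit_separation Ac Bc Ba Aa Hac). }
      split; auto. destruct (proj1 limit_separation c); tauto.
    - split; auto. destruct (proj1 limit_separation y); tauto. }
  assert (Av' : limA v) by now exists i.
  split; auto. apply NNPP; intro Bv'.
  exact (separation_sym_no_edge _ _ v u limit_separation Av' Bv' (proj1 Pu) (proj2 Pu) Huv).
Qed.

Lemma As_stalls v : As (S N) v -> As N v.
Proof.
  intros Av. apply NNPP; intro nAv.
  (* [As (S N) \ As N] is closed under adjacency but misses [x0] *)
  assert (Hall : As (S N) x0 /\ ~ As N x0).
  { apply (connected_closed (fun w => As (S N) w /\ ~ As N w) v x0 connected); auto.
    intros w z Hwz [Aw nAw].
    assert (Bw : ~ Bs (S N) w).
    { intro Bw. apply nAw, limit_separator_sub_sep; auto.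
      apply (sep_separator_sub_limit (S N)); auto. }
    assert (BwN : Bs N w) by (destruct (proj1 (sep N) w); tauto).
    split.
    - apply NNPP; intro Az.
      assert (Bz : Bs (S N) z) by (destruct (proj1 (sep (S N)) z); tauto).
      exact (proj2 (sep (S N)) w z Aw Bw Bz Az Hwz).
    - intro Az. destruct (classic (Bs N z)) as [Bz|Bz].
      + apply nAw. apply (neighbour_of_separator_in_As w z N); auto.
        * apply (sep_separator_sub_limit N); auto.
        * now exists (S N).
      + exact (separation_sym_no_edge _ _ z w (sep N) Az Bz BwN nAw Hwz). }
  apply (proj2 Hall), limit_separator_sub_sep; auto.
Qed.

Lemma Bs_stalls v : Bs N v -> Bs (S N) v.
Proof.
  intros Bv. destruct (classic (As N v)) as [Av|Av].
  - apply (sep_separator_sub_limit N); auto.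
  - destruct (proj1 (sep (S N)) v) as [A'|]; auto.
    exfalso. now apply Av, As_stalls.
Qed.

Lemma chain_stalls :
  set_eq V (As N) (As (S N)) /\ set_eq V (Bs N) (Bs (S N)).
Proof.
  split; intro v; split.
  - apply (proj1 (chain N)).
  - apply As_stalls.
  - apply Bs_stalls.
  - apply (proj2 (chain N)).
Qed.

End FiniteSeparator.
End Limit.
End Graph.

Theorem mainTheorem5 (V : Type) (adj : V -> V -> Prop)
  (As Bs : nat -> V -> Prop) :
  simple_graph adj ->
  connected_graph adj ->
  locally_finite adj ->
  (forall i, tight_separation adj (As i) (Bs i)) ->
  (forall i, sep_lt (As i) (Bs i) (As (S i)) (Bs (S i))) ->
  let A := fun v => exists i, As i v in
  let B := fun v => forall i, Bs i v in
  (exists v, B v) ->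
  ~ finite_set (fun v => A v /\ B v).
Proof.
  intros [Hsym _] Hconn Hlf Htight Hlt A B [b Bb] Hfin.
  assert (Hchain : forall i, sep_le V (As i) (Bs i) (As (S i)) (Bs (S i)))
    by (intro i; exact (proj1 (Hlt i))).
  destruct (tight_separation_left V adj _ _ (Htight 0)) as [a [Aa Ba]].
  destruct (separator_nonempty V adj A B a b Hconn
              (limit_separation V adj As Bs Htight Hchain) (ex_intro _ 0 Aa)
              (fun H => Ba (H 0)) Bb) as [x0 Xx0].
  destruct (finite_eventually_in_As V As Bs Hchain _
              (finite_union V _ _ Hfin (finite_neighbourhood V adj _ Hlf Hfin)))
    as [N HN].
  exact (proj2 (Hlt N)
           (chain_stalls V adj Hsym As Bs Htight Hchain Hconn x0 Xx0 N HN)).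
Qed.
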